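(* Let $\mathcal{A}$ be a learning-augmented memory-constrained algorithm for the $2$-server problem on the line and let $\lambda\in(0,1]$. If $\mathcal{A}$ is $(1+\lambda)$-consistent, then it is not $\beta'$-robust for any $\beta'<1+1/\lambda$ (i.e., it is at least $(1+1/\lambda)$-robust).
   Context: The $2$-server problem on the line: servers on $\mathbb{R}$, requests revealed online, each served by moving a server to it; cost = total distance moved; $\mathrm{OPT}$ is the optimal offline cost. A prediction gives for each request an index in $\{1,2\}$ (the predicted server, servers labeled by position); FtP serves each request by the predicted server, and $\eta=\mathrm{FtP}-\mathrm{OPT}$. $\alpha$-consistent: $\mathcal{A}(I)\le\alpha\,\mathrm{OPT}(I)+c$ for every instance and every prediction with $\eta=0$; $\beta$-robust: $\mathcal{A}(I)\le\beta\,\mathrm{OPT}(I)+c$ for every instance and prediction; $c$ depends only on the initial configuration. Memory-constrained: each decision depends only on the current configuration, current request and current prediction; several servers may be moved per request; and for any set of $k$ distinct points and any configuration there exists a finite sequence of requests among these points (a force) after which each point contains exactly one server. *)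

From HB Require Import structures.
From mathcomp Require Import all_boot all_order all_algebra.
From mathcomp Require Import boolp classical_sets reals.
Set Implicit Arguments. Unset Strict Implicit. Unset Printing Implicit Defensive.
Import Order.TTheory GRing.Theory Num.Theory.
Local Open Scope ring_scope.
Local Open Scope classical_set_scope.

(* Server labels: servers are labelled by position,
   [S1] = the leftmost server, [S2] = the rightmost server. *)
Inductive srv := S1 | S2.

Section TwoServer.
Variable R : realType.

(* A configuration of the 2 servers: a pair of positions (an unordered
   multiset; the canonical representative is sorted, see [sort2]). *)
Definition config := (R * R)%type.

Definition sort2 (C : config) : config := (Num.min C.1 C.2, Num.max C.1 C.2).

Definition dist (C D : config) : R :=
  Num.min (`|C.1 - D.1| + `|C.2 - D.2|) (`|C.1 - D.2| + `|C.2 - D.1|).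

Definition covers (C : config) (r : R) : Prop := C.1 = r \/ C.2 = r.

(* A memory-constrained (learning-augmented) algorithm: the new configuration
   is a function of the current configuration, current request and current
   prediction only (several servers may be moved). *)
Definition malg := config -> R -> srv -> config.

Definition valid_alg (A : malg) : Prop :=
  forall C r p, covers (A C r p) r.

(* Running A on a sequence of (request, prediction) pairs; the current
   configuration is always presented to A in canonical (sorted) form, so
   that A sees nothing but the configuration. *)
Fixpoint alg_cost (A : malg) (C : config) (s : seq (R * srv)) : R :=
  match s with
  | [::] => 0
  | (r, p) :: s' => let C' := sort2 (A C r p) in dist C C' + alg_cost A C' s'
  end.

Fixpoint alg_final (A : malg) (C : config) (s : seq (R * srv)) : config :=
  match s with
  | [::] => C
  | (r, p) :: s' => alg_final A (sort2 (A C r p)) s'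
  end.

Definition ALG (A : malg) (C0 : config) (s : seq (R * srv)) : R :=
  alg_cost A (sort2 C0) s.

Definition ftp_step : malg := fun C r p =>
  match p with
  | S1 => (r, Num.max C.1 C.2)
  | S2 => (Num.min C.1 C.2, r)
  end.

Definition FtP (C0 : config) (s : seq (R * srv)) : R := ALG ftp_step C0 s.

Fixpoint sched_cost (C : config) (Cs : seq config) : R :=
  match Cs with
  | [::] => 0
  | D :: Cs' => dist C D + sched_cost D Cs'
  end.

Definition feasible (rs : seq R) (Cs : seq config) : Prop :=
  size Cs = size rs /\
  forall i, (i < size rs)%N -> covers (nth (0, 0) Cs i) (nth 0 rs i).

Definition OPT (C0 : config) (rs : seq R) : R :=
  inf [set x | exists Cs, feasible rs Cs /\ x = sched_cost C0 Cs].

Definition eta (C0 : config) (s : seq (R * srv)) : R :=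
  FtP C0 s - OPT C0 (map fst s).

Definition consistent (A : malg) (alpha : R) : Prop :=
  forall C0 : config, exists c : R, forall s : seq (R * srv),
    eta C0 s = 0 -> ALG A C0 s <= alpha * OPT C0 (map fst s) + c.

Definition robust (A : malg) (beta : R) : Prop :=
  forall C0 : config, exists c : R, forall s : seq (R * srv),
    ALG A C0 s <= beta * OPT C0 (map fst s) + c.

Definition has_forces (A : malg) : Prop :=
  forall (x y : R), x != y -> forall C : config,
    exists rs : seq R, all (fun r => (r == x) || (r == y)) rs /\
      forall ps : seq srv, size ps = size rs ->
        let D := alg_final A (sort2 C) (zip rs ps) in
        (D.1 = x /\ D.2 = y) \/ (D.1 = y /\ D.2 = x).

Definition memory_constrained (A : malg) : Prop :=
  valid_alg A /\ has_forces A.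

End TwoServer.

From Pilot Require Import Defs.
From HB Require Import structures.
From mathcomp Require Import all_boot all_order all_algebra.
From mathcomp Require Import boolp classical_sets reals.
From mathcomp Require Import ring lra.
Import Order.TTheory GRing.Theory Num.Theory.
Local Open Scope ring_scope.

(* Start from the configuration (0, 1) and request a point r in (0, 1) with the
   prediction "right server". A memory-constrained algorithm answers with one of
   its servers, and it will answer the same way every time it is back in (0, 1).

   If it moves its left server to r, the adversary alternates requests at 0 and r
   n times (n r >= 1), requests 1, and forces (0, 1) back. Follow-the-Prediction
   pays 2 (1 - r) per round and is optimal: an offline schedule either brings its
   right server down to r and back to 1, or shuttles its left server. The algorithm
   pays at least 2 per round, so it is not (1 + lambda)-consistent once
   (1 + lambda) (1 - r) < 1.

   If it moves its right server to r, the adversary forces (r, 1) and then (0, 1).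
   The algorithm again pays at least 2 per round, the optimum only 2 r, so it is
   not beta'-robust once beta' r < 1. Both conditions hold for a suitable r
   precisely because beta' < 1 + 1 / lambda. *)

Definition rounds {T : Type} (N : nat) (s : seq T) : seq T := flatten (nseq N s).

Lemma roundsS {T : Type} N (s : seq T) : rounds N.+1 s = s ++ rounds N s.
Proof. by []. Qed.

Lemma map_rounds {T U : Type} (f : T -> U) N s :
  map f (rounds N s) = rounds N (map f s).
Proof. by rewrite /rounds map_flatten map_nseq. Qed.

Lemma mem_rounds {T : eqType} N (s : seq T) x : x \in rounds N s -> x \in s.
Proof. by elim: N => //= N IH; rewrite mem_cat => /orP[|/IH]. Qed.

Lemma last_nseq_id {T : Type} (x : T) k : last x (nseq k x) = x.
Proof. by elim: k. Qed.

Ltac split_norms := repeat match goal with |- context[`|?x|] =>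
  let h := fresh in have [h|h] := lerP 0 x;
  [rewrite (ger0_norm h) | rewrite (ltr0_norm h)] end.

Section TwoServerLine.
Context {R : realType}.
Implicit Types (C D S Z : config R) (Cs : seq (config R)) (p q r x y : R) (rs : seq R).

Lemma exists_nat_mul_gt (k c : R) : 0 < k -> exists N : nat, c < N%:R * k.
Proof.
move=> k0; exists (Num.bound (`|c| / k)).
have := archi_boundP (divr_ge0 (normr_ge0 c) (ltW k0)).
rewrite ltr_pdivrMr //; apply: le_lt_trans; exact: ler_norm.
Qed.

(** * Configurations and paths *)

Definition lo C : R := Num.min C.1 C.2.
Definition hi C : R := Num.max C.1 C.2.

Lemma lo_sorted {C} : C.1 <= C.2 -> lo C = C.1.
Proof. by move=> h; rewrite /lo (min_l h). Qed.

Lemma hi_sorted {C} : C.1 <= C.2 -> hi C = C.2.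
Proof. by move=> h; rewrite /hi (max_r h). Qed.

Lemma sort2_sorted C : (sort2 C).1 <= (sort2 C).2.
Proof. by rewrite /sort2 /= ge_min !le_max !lexx. Qed.

Lemma sort2_id C : C.1 <= C.2 -> sort2 C = C.
Proof. by case: C => a b /= h; rewrite /sort2 /= (min_l h) (max_r h). Qed.

Lemma covers_sort2 {C q} : covers C q -> covers (sort2 C) q.
Proof.
rewrite /sort2 /covers; case: C => a b /=; have [h|h] := lerP a b;
  rewrite ?(min_l h) ?(max_r h) ?(min_r (ltW h)) ?(max_l (ltW h)) /=; tauto.
Qed.

Lemma covers_pair x y q : (q == x) || (q == y) -> covers (x, y) q.
Proof. by case/orP => /eqP ->; [left|right]. Qed.

Lemma covers_lo_le {C q} : covers C q -> lo C <= q.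
Proof. by rewrite /lo ge_min => -[->|->]; rewrite lexx ?orbT. Qed.

Lemma covers_hi_ge {C q} : covers C q -> q <= hi C.
Proof. by rewrite /hi le_max => -[->|->]; rewrite lexx ?orbT. Qed.

Lemma covers_lo_eq {C q} : covers C q -> q < hi C -> lo C = q.
Proof.
rewrite /lo /hi; case: C => a b /= hC; have [h|h] := lerP a b;
  rewrite ?(min_l h) ?(max_r h) ?(min_r (ltW h)) ?(max_l (ltW h)) => hq;
  case: hC => /= hC; lra.
Qed.

Lemma dist_ge_lo_hi C D : `|lo C - lo D| + `|hi C - hi D| <= dist C D.
Proof.
have key (c1 c2 d1 d2 : R) : `|Num.min c1 c2 - Num.min d1 d2| +
    `|Num.max c1 c2 - Num.max d1 d2| <= `|c1 - d1| + `|c2 - d2|.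
  have [h1|h1] := lerP c1 c2; have [h2|h2] := lerP d1 d2;
  rewrite ?(min_l (ltW h1)) ?(max_r (ltW h1)) ?(min_r (ltW h1)) ?(max_l (ltW h1))
    ?(min_l h1) ?(max_r h1) ?(min_r (ltW h2)) ?(max_l (ltW h2)) ?(min_l h2) ?(max_r h2);
  split_norms; lra.
rewrite /dist le_min key /=.
by have := key C.1 C.2 D.2 D.1; rewrite /lo /hi (minC D.2) (maxC D.2).
Qed.

Lemma dist_le C D : dist C D <= `|C.1 - D.1| + `|C.2 - D.2|.
Proof. by rewrite /dist ge_min lexx. Qed.

Lemma dist_ge0 C D : 0 <= dist C D.
Proof. by apply: le_trans (dist_ge_lo_hi C D); rewrite addr_ge0. Qed.

Lemma dist_xx C : dist C C = 0.
Proof.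
apply/eqP; rewrite eq_le dist_ge0 andbT.
by apply: le_trans (dist_le C C) _; rewrite !subrr normr0 addr0.
Qed.

Fixpoint path_len p (s : seq R) : R :=
  if s is q :: s' then `|p - q| + path_len q s' else 0.

Lemma path_len_cat p s1 s2 :
  path_len p (s1 ++ s2) = path_len p s1 + path_len (last p s1) s2.
Proof. by elim: s1 p => [|q s1 IH] p /=; rewrite ?add0r ?IH ?addrA. Qed.

Lemma path_len_ge0 p s : 0 <= path_len p s.
Proof. by elim: s p => [|q s IH] p //=; rewrite addr_ge0. Qed.

Lemma path_len_last p s : `|p - last p s| <= path_len p s.
Proof.
elim: s p => [|q s IH] p /=; first by rewrite subrr normr0.
by apply: le_trans (ler_distD q p (last q s)) _; rewrite lerD2l.
Qed.

Lemma path_len_via p s z :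
  z \in s -> `|p - z| + `|z - last p s| <= path_len p s.
Proof.
case/splitPr=> s1 s2; rewrite path_len_cat last_cat /=.
have := path_len_last p s1; have := path_len_last z s2.
have := ler_distD (last p s1) p z; lra.
Qed.

Lemma path_len_infix p s1 s2 s3 :
  path_len (last p s1) s2 <= path_len p (s1 ++ s2 ++ s3).
Proof.
rewrite !path_len_cat.
have := path_len_ge0 p s1; have := path_len_ge0 (last (last p s1) s2) s3; lra.
Qed.

(** * Schedules and the offline optimum *)

Lemma sched_cost_cat C Cs1 Cs2 :
  sched_cost C (Cs1 ++ Cs2) = sched_cost C Cs1 + sched_cost (last C Cs1) Cs2.
Proof. by elim: Cs1 C => [|D Cs1 IH] C /=; rewrite ?add0r ?IH ?addrA. Qed.

Lemma sched_cost_ge0 C Cs : 0 <= sched_cost C Cs.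
Proof. by elim: Cs C => [|D Cs IH] C //=; rewrite addr_ge0 ?dist_ge0. Qed.

Lemma sched_cost_nseq C k : sched_cost C (nseq k C) = 0.
Proof. by elim: k => //= k ->; rewrite dist_xx addr0. Qed.

Lemma sched_cost_rounds C Cs N :
  last C Cs = C -> sched_cost C (rounds N Cs) = N%:R * sched_cost C Cs.
Proof.
move=> hl; elim: N => [|N IH]; first by rewrite mul0r.
by rewrite roundsS sched_cost_cat hl IH -addn1 natrD mulrDl mul1r addrC.
Qed.

Lemma sched_cost_ge_paths S Cs :
  path_len (lo S) (map lo Cs) + path_len (hi S) (map hi Cs) <= sched_cost S Cs.
Proof.
elim: Cs S => [|D Cs IH] S /=; first by rewrite addr0.
have := dist_ge_lo_hi S D; have := IH D; lra.
Qed.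

Lemma sched_cost_ge_via S {Cs Z Z'} : Z \in Cs -> Z' \in Cs ->
  `|lo S - lo Z'| + `|lo Z' - lo (last S Cs)| +
  (`|hi S - hi Z| + `|hi Z - hi (last S Cs)|) <= sched_cost S Cs.
Proof.
move=> hZ hZ'; apply: le_trans (sched_cost_ge_paths S Cs).
rewrite -(last_map lo) -(last_map hi).
by apply: lerD; apply: path_len_via; apply: map_f.
Qed.

Lemma sched_cost_ge_lo_infix S Cs1 B T Cs3 :
  path_len (lo B) (map lo T) <= sched_cost S (Cs1 ++ B :: T ++ Cs3).
Proof.
have -> : Cs1 ++ B :: T ++ Cs3 = (Cs1 ++ [:: B]) ++ T ++ Cs3 by rewrite -catA.
apply: le_trans (sched_cost_ge_paths S _).
have := path_len_infix (lo S) (map lo (Cs1 ++ [:: B])) (map lo T) (map lo Cs3).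
rewrite -!map_cat last_map last_cat /=.
have := path_len_ge0 (hi S) (map hi ((Cs1 ++ [:: B]) ++ T ++ Cs3)); lra.
Qed.

(* The left server travels 0 -> lo Z' -> 0 and the right one 1 -> hi Z -> 1. *)
Lemma sched_cost_cross_ge2 {Cs Z Z'} :
  last (0, 1) Cs = (0, 1) -> Z \in Cs -> Z' \in Cs -> hi Z <= lo Z' ->
  2 <= sched_cost (0, 1) Cs.
Proof.
move=> hl hZ hZ' hle; have := sched_cost_ge_via (0, 1) hZ hZ'.
have s01 : ((0, 1) : config R).1 <= ((0, 1) : config R).2 := ler01.
rewrite hl (lo_sorted s01) (hi_sorted s01) /=.
have d (a b : R) : b - a <= `|a - b| by rewrite distrC ler_norm.
have := d 0 (lo Z'); have := ler_norm (lo Z' - 0).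
have := ler_norm (1 - hi Z); have := d (hi Z) 1; lra.
Qed.

Fixpoint serves rs Cs : Prop :=
  match rs, Cs with
  | [::], [::] => True
  | q :: rs', D :: Cs' => covers D q /\ serves rs' Cs'
  | _, _ => False
  end.

Lemma feasibleE rs Cs : feasible rs Cs <-> serves rs Cs.
Proof.
rewrite /feasible; elim: rs Cs => [|q rs IH] [|D Cs] //=; split => //.
- by case.
- by case.
- case=> -[hs] h; split; first exact: (h 0%N).
  by apply/IH; split=> // i; apply: (h i.+1).
- by case=> hD /IH[-> h]; split=> // -[|i] //=; apply: h.
Qed.

Lemma serves_cat rs1 rs2 Cs1 Cs2 :
  serves rs1 Cs1 -> serves rs2 Cs2 -> serves (rs1 ++ rs2) (Cs1 ++ Cs2).
Proof.
by elim: rs1 Cs1 => [|q rs1 IH] [|D Cs1] //= [h1 h2] h3; split => //; apply: IH.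
Qed.

Lemma serves_catP rs1 rs2 Cs : serves (rs1 ++ rs2) Cs ->
  exists Cs1 Cs2, [/\ Cs = Cs1 ++ Cs2, serves rs1 Cs1 & serves rs2 Cs2].
Proof.
elim: rs1 Cs => [|q rs1 IH] Cs /=; first by move=> h; exists [::], Cs.
case: Cs => [|D Cs] //= [hD /IH [Cs1 [Cs2 [-> h1 h2]]]].
by exists (D :: Cs1), Cs2.
Qed.

Lemma serves_rounds rs Cs N : serves rs Cs -> serves (rounds N rs) (rounds N Cs).
Proof. by move=> h; elim: N => //= N IH; apply: serves_cat. Qed.

Lemma serves_nseq D rs : {in rs, forall q, covers D q} -> serves rs (nseq (size rs) D).
Proof.
elim: rs => //= q rs IH h; split; first by apply: h; rewrite mem_head.
by apply: IH => q' hq'; apply: h; rewrite in_cons hq' orbT.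
Qed.

Lemma OPT_le_sched C rs Cs : serves rs Cs -> OPT C rs <= sched_cost C Cs.
Proof.
move=> h; apply: ge_inf; last by exists Cs; split => //; apply/feasibleE.
by exists 0 => x [Cs' [_ ->]]; apply: sched_cost_ge0.
Qed.

Lemma serves_diag rs : serves rs [seq (q, q) | q <- rs].
Proof. by elim: rs => //= q rs IH; split => //; left. Qed.

Lemma OPT_ge C rs m :
  (forall Cs, serves rs Cs -> m <= sched_cost C Cs) -> m <= OPT C rs.
Proof.
move=> h; apply: lb_le_inf.
  exists (sched_cost C [seq (q, q) | q <- rs]), [seq (q, q) | q <- rs].
  by split => //; apply/feasibleE/serves_diag.
by move=> x [Cs [/feasibleE hCs ->]]; apply: h.
Qed.

Lemma OPT_ge0 C rs : 0 <= OPT C rs.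
Proof. by apply: OPT_ge => Cs _; apply: sched_cost_ge0. Qed.

Lemma OPT_rounds_le {C rs Cs} N : serves rs Cs -> last C Cs = C ->
  OPT C (rounds N rs) <= N%:R * sched_cost C Cs.
Proof.
move=> h hl; rewrite -sched_cost_rounds //.
exact/OPT_le_sched/serves_rounds.
Qed.

Lemma robust_le (A : malg R) beta beta' :
  robust A beta -> beta <= beta' -> robust A beta'.
Proof.
move=> hA hb C0; have [c hc] := hA C0; exists c => s.
apply: le_trans (hc s) _; rewrite lerD2r.
by rewrite ler_wpM2r ?OPT_ge0.
Qed.

(** * Runs of an online algorithm *)

Definition pred_srv q : srv := if q == 0 then S1 else S2.

Definition predicted rs : seq (R * srv) := [seq (q, pred_srv q) | q <- rs].

Lemma map_fst_predicted rs : map fst (predicted rs) = rs.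
Proof. by elim: rs => //= q rs ->. Qed.

Lemma predicted_cat rs1 rs2 : predicted (rs1 ++ rs2) = predicted rs1 ++ predicted rs2.
Proof. exact: map_cat. Qed.

Section Runs.
Variable A : malg R.

Fixpoint alg_traj C (s : seq (R * srv)) : seq (config R) :=
  if s is (q, p) :: s' then sort2 (A C q p) :: alg_traj (sort2 (A C q p)) s'
  else [::].

Lemma alg_traj_cons C q (p : srv) s :
  alg_traj C ((q, p) :: s) = sort2 (A C q p) :: alg_traj (sort2 (A C q p)) s.
Proof. by []. Qed.

Lemma alg_cost_traj C s : alg_cost A C s = sched_cost C (alg_traj C s).
Proof. by elim: s C => [|[q p] s IH] C //=; rewrite IH. Qed.

Lemma alg_final_traj C s : alg_final A C s = last C (alg_traj C s).
Proof. by elim: s C => [|[q p] s IH] C //=. Qed.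

Lemma alg_traj_cat C s1 s2 :
  alg_traj C (s1 ++ s2) = alg_traj C s1 ++ alg_traj (alg_final A C s1) s2.
Proof. by elim: s1 C => [|[q p] s1 IH] C //=; rewrite IH. Qed.

Lemma alg_final_cat C s1 s2 :
  alg_final A C (s1 ++ s2) = alg_final A (alg_final A C s1) s2.
Proof. by elim: s1 C => [|[q p] s1 IH] C //=. Qed.

Lemma alg_cost_cat C s1 s2 :
  alg_cost A C (s1 ++ s2) = alg_cost A C s1 + alg_cost A (alg_final A C s1) s2.
Proof. by rewrite !alg_cost_traj alg_traj_cat sched_cost_cat alg_final_traj. Qed.

Lemma alg_final_sorted C s : C.1 <= C.2 -> (alg_final A C s).1 <= (alg_final A C s).2.
Proof. by elim: s C => [|[q p] s IH] C //= _; apply/IH/sort2_sorted. Qed.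

Lemma serves_alg_traj C s : valid_alg A -> serves (map fst s) (alg_traj C s).
Proof.
by move=> vA; elim: s C => [|[q p] s IH] C //=; split; [apply/covers_sort2/vA|].
Qed.

Lemma alg_cost_rounds C s N :
  alg_final A C s = C -> alg_cost A C (rounds N s) = N%:R * alg_cost A C s.
Proof.
move=> hf; rewrite !alg_cost_traj -sched_cost_rounds -?alg_final_traj //.
congr sched_cost; elim: N => //= N IH.
by rewrite alg_traj_cat hf IH.
Qed.

Lemma alg_stay C rs : {in rs, forall q, sort2 (A C q (pred_srv q)) = C} ->
  alg_cost A C (predicted rs) = 0 /\ alg_final A C (predicted rs) = C.
Proof.
elim: rs => [|q rs IH] //= h.
rewrite h ?mem_head // dist_xx add0r; apply: IH => q' hq'.
by apply: h; rewrite in_cons hq' orbT.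
Qed.

Lemma OPT_le_ALG C s : valid_alg A -> C.1 <= C.2 -> OPT C (map fst s) <= ALG A C s.
Proof.
move=> vA hC; rewrite /ALG sort2_id // alg_cost_traj.
exact/OPT_le_sched/serves_alg_traj.
Qed.

Lemma ALG_rounds_gt {C s alpha k K} c :
  C.1 <= C.2 -> alg_final A C s = C -> K <= alg_cost A C s ->
  0 <= alpha -> alpha * k < K ->
  (forall N, OPT C (map fst (rounds N s)) <= N%:R * k) ->
  exists N, alpha * OPT C (map fst (rounds N s)) + c < ALG A C (rounds N s).
Proof.
move=> hC hf hK a0 gap hopt.
have [|N hN] := exists_nat_mul_gt (K - alpha * k) c; first by rewrite subr_gt0.
exists N; rewrite /ALG sort2_id // alg_cost_rounds //.
have := ler_wpM2l a0 (hopt N); have := ler_wpM2l (ler0n R N) hK.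
have e : N%:R * (K - alpha * k) = N%:R * K - alpha * (N%:R * k) by ring.
lra.
Qed.

End Runs.

(** * The adversary *)

Lemma force_predicted {A : malg R} {x y C} : has_forces A -> x < y -> C.1 <= C.2 ->
  exists rs, all (fun q => (q == x) || (q == y)) rs /\
    alg_final A C (predicted rs) = (x, y).
Proof.
move=> hF xy hC; have [|rs [hall h]] := hF x y _ C; first by rewrite lt_eqF.
have zipE : zip rs (map pred_srv rs) = predicted rs by elim: rs {hall h} => //= q rs ->.
exists rs; split => //; move: (h _ (size_map pred_srv rs)); rewrite sort2_id //= zipE.
have := alg_final_sorted A C (predicted rs) hC.
by case: (alg_final A C (predicted rs)) => a b /= hab [[-> ->] //|[ha hb]]; exfalso; lra.
Qed.

Lemma ftp_valid : valid_alg (@ftp_step R).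
Proof. by move=> C q []; [left|right]. Qed.

Lemma ftp_pred_move {x y} : 0 <= x -> 0 < y ->
  sort2 (ftp_step (0, x) y (pred_srv y)) = (0, y).
Proof.
move=> x0 y0; rewrite /pred_srv gt_eqF //= (min_l x0).
by rewrite sort2_id //= ltW.
Qed.

Lemma ftp_pred_zero {x} : 0 <= x -> sort2 (ftp_step (0, x) 0 (pred_srv 0)) = (0, x).
Proof. by move=> x0; rewrite /pred_srv eqxx /= (max_r x0) sort2_id. Qed.

Lemma ftp_stay {x rs} : 0 < x -> all (fun q => (q == 0) || (q == x)) rs ->
  alg_cost (@ftp_step R) (0, x) (predicted rs) = 0 /\
  alg_final (@ftp_step R) (0, x) (predicted rs) = (0, x).
Proof.
move=> x0 /allP hrs; apply: alg_stay => q /hrs /orP[] /eqP ->.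
  exact/ftp_pred_zero/ltW.
exact: ftp_pred_move (ltW x0) x0.
Qed.

Definition shuttle r n : seq R := rounds n [:: 0; r].

Lemma path_len_shuttle r n Cs : serves (shuttle r n) Cs ->
  all (fun Z => r < hi Z) Cs -> 2 * (n%:R * r) <= path_len r (map lo Cs).
Proof.
elim: n Cs => [|n IH] Cs; first by case: Cs => //; rewrite !mul0r mulr0.
rewrite /shuttle roundsS /=; case: Cs => [|Z1 [|Z2 Cs]] //=; first by case.
move=> [hZ1 [hZ2 hCs]] /and3P[_ hr2 hr].
rewrite (covers_lo_eq hZ2 hr2).
have := IH Cs hCs hr; have := covers_lo_le hZ1.
have := ler_norm (r - lo Z1); rewrite distrC; have := ler_norm (r - lo Z1).
rewrite -addn1 natrD; lra.
Qed.

Lemma serves_shuttle_cases {r n Cs} : serves (r :: shuttle r n) Cs ->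
  (exists2 Z, Z \in Cs & hi Z <= r) \/
  exists B T, [/\ Cs = B :: T, lo B = r & 2 * (n%:R * r) <= path_len r (map lo T)].
Proof.
move=> hs; have [/hasP[Z hZ hZr]|/hasPn hCs] := boolP (has (fun Z => hi Z <= r) Cs).
  by left; exists Z.
right; case: Cs hs hCs => [|B T] //= [hB hT] hBT.
have hr Z : Z \in B :: T -> r < hi Z by move/hBT; rewrite ltNge.
exists B, T; split => //; first by apply: covers_lo_eq hB (hr _ (mem_head _ _)).
apply: path_len_shuttle hT _; apply/allP => Z hZ.
by apply: hr; rewrite in_cons hZ orbT.
Qed.

Lemma serves_last {rs q} S {Cs} : serves (rs ++ [:: q]) Cs -> covers (last S Cs) q.
Proof.
case/serves_catP=> Cs1 [Cl [-> _ hl]]; rewrite last_cat.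
by case: Cl hl => [|Z [|? ?]] //= [].
Qed.

Lemma sched_cost_window_ge {r n} S {G Cs} : 0 < r -> 1 <= n%:R * r -> 1 <= hi S ->
  serves ((G ++ r :: shuttle r n) ++ [:: 1]) Cs -> 2 * (1 - r) <= sched_cost S Cs.
Proof.
move=> r0 hn hS hs; have hl := covers_hi_ge (serves_last S hs).
move: hs hl => /serves_catP[Crest [Cl [-> /serves_catP[Cg [Cb [-> _ hb]]] _]]].
rewrite -catA => hl.
case: (serves_shuttle_cases hb) => [[Z hZ hZr] | [B [T [-> hB hT]]]].
  have hZ' : Z \in Cg ++ Cb ++ Cl by rewrite !mem_cat hZ orbT.
  have := sched_cost_ge_via S hZ' hZ'; have := ler_norm (hi S - hi Z).
  have := ler_norm (hi (last S (Cg ++ Cb ++ Cl)) - hi Z); rewrite distrC.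
  have := normr_ge0 (lo S - lo Z).
  have := normr_ge0 (lo Z - lo (last S (Cg ++ Cb ++ Cl))).
  lra.
have := sched_cost_ge_lo_infix S Cg B T Cl; rewrite hB; lra.
Qed.

Definition shuttle_round r n F : seq (R * srv) :=
  predicted ((r :: shuttle r n) ++ 1 :: F).

Lemma OPT_shuttle_rounds_ge r n F N : 0 < r -> 1 <= n%:R * r ->
  N%:R * (2 * (1 - r)) <= OPT (0, 1) (map fst (rounds N (shuttle_round r n F))).
Proof.
move=> r0 hn; rewrite map_rounds map_fst_predicted; apply: OPT_ge.
suff h S G Cs : 1 <= hi S -> serves (G ++ rounds N ((r :: shuttle r n) ++ 1 :: F)) Cs ->
    N%:R * (2 * (1 - r)) <= sched_cost S Cs.
  by move=> Cs; apply: (h _ [::]); rewrite hi_sorted ?ler01.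
elim: N S G Cs => [|N IH] S G Cs hS; first by rewrite mul0r sched_cost_ge0.
have -> : G ++ rounds N.+1 ((r :: shuttle r n) ++ 1 :: F) =
    ((G ++ r :: shuttle r n) ++ [:: 1]) ++ F ++ rounds N ((r :: shuttle r n) ++ 1 :: F).
  by rewrite roundsS -!catA.
case/serves_catP=> Cs1 [Cs2 [-> h1 h2]].
have := sched_cost_window_ge S r0 hn hS h1.
have := IH _ _ _ (covers_hi_ge (serves_last S h1)) h2.
rewrite sched_cost_cat -addn1 natrD mulrDl mul1r; lra.
Qed.

Lemma ftp_shuttle_round r n F : 0 < r -> r < 1 ->
  all (fun q => (q == 0) || (q == 1)) F ->
  alg_cost (@ftp_step R) (0, 1) (shuttle_round r n F) <= 2 * (1 - r) /\
  alg_final (@ftp_step R) (0, 1) (shuttle_round r n F) = (0, 1).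
Proof.
move=> r0 r1 hF; rewrite /shuttle_round /predicted map_cat.
have hsh : all (fun q => (q == 0) || (q == r)) (shuttle r n).
  by apply/allP => q /mem_rounds; rewrite !inE => /orP[] ->; rewrite ?orbT.
have [c1 f1] := ftp_stay r0 hsh; have [c2 f2] := ftp_stay ltr01 hF.
rewrite [alg_cost _ _ _]/= [alg_final _ _ _]/= (ftp_pred_move ler01 r0).
rewrite alg_cost_cat alg_final_cat f1 /=.
rewrite (ftp_pred_move (ltW r0) ltr01) f2 c1 c2; split => //.
have := dist_le (0, 1) (0, r); have := dist_le (0, r) (0, 1).
have a : `|1 - r| = 1 - r by rewrite gtr0_norm // subr_gt0.
rewrite /= subrr normr0 !add0r distrC a; lra.
Qed.

Lemma shuttle_rounds_eta r n F N : 0 < r -> r < 1 -> 1 <= n%:R * r ->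
  all (fun q => (q == 0) || (q == 1)) F ->
  Defs.eta (0, 1) (rounds N (shuttle_round r n F)) = 0 /\
  OPT (0, 1) (map fst (rounds N (shuttle_round r n F))) <= N%:R * (2 * (1 - r)).
Proof.
move=> r0 r1 hn hF; have [cost fin] := ftp_shuttle_round r n F r0 r1 hF.
have hFtP : FtP (0, 1) (rounds N (shuttle_round r n F)) <= N%:R * (2 * (1 - r)).
  by rewrite /FtP /ALG sort2_id ?ler01 // alg_cost_rounds // ler_wpM2l.
have := OPT_shuttle_rounds_ge r n F N r0 hn.
have := OPT_le_ALG (@ftp_step R) (0, 1) (rounds N (shuttle_round r n F)) ftp_valid ler01.
rewrite /Defs.eta -/(FtP _ _); lra.
Qed.

Lemma alg_cost_shuttle_round_ge {A : malg R} {r n s1 s2} : valid_alg A ->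
  1 <= n%:R * r -> (sort2 (A (0, 1) r (pred_srv r))).1 = r ->
  map fst s1 = shuttle r n ->
  alg_final A (0, 1) ((r, pred_srv r) :: s1 ++ s2) = (0, 1) ->
  2 <= alg_cost A (0, 1) ((r, pred_srv r) :: s1 ++ s2).
Proof.
set D := sort2 _ => vA hn hD hs1.
rewrite alg_cost_traj alg_final_traj alg_traj_cons -/D alg_traj_cat => hl.
have hloD : lo D = r by rewrite lo_sorted ?sort2_sorted.
have hsv : serves (r :: shuttle r n) (D :: alg_traj A D s1).
  by split; [rewrite -hD; left | rewrite -hs1; apply: serves_alg_traj].
case: (serves_shuttle_cases hsv) => [[Z hZ hZr] | [B [T [[<- <-] _ hT]]]].
  have hZ' : Z \in D :: alg_traj A D s1 ++ alg_traj A (alg_final A D s1) s2.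
    by rewrite -cat_cons mem_cat hZ.
  by apply: (sched_cost_cross_ge2 hl hZ' (mem_head _ _)); rewrite hloD.
have := sched_cost_ge_lo_infix (0, 1) [::] D (alg_traj A D s1)
  (alg_traj A (alg_final A D s1) s2).
rewrite hloD; lra.
Qed.

Lemma alg_cost_return_round_ge {A : malg R} {r s1 s2} : r < 1 ->
  (sort2 (A (0, 1) r (pred_srv r))).2 = r ->
  alg_final A (sort2 (A (0, 1) r (pred_srv r))) s1 = (r, 1) ->
  alg_final A (0, 1) ((r, pred_srv r) :: s1 ++ s2) = (0, 1) ->
  2 <= alg_cost A (0, 1) ((r, pred_srv r) :: s1 ++ s2).
Proof.
set D := sort2 _ => r1 hD h1.
rewrite alg_cost_traj alg_final_traj alg_traj_cons -/D alg_traj_cat => hl.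
apply: (sched_cost_cross_ge2 hl (mem_head _ _) (_ : (r, 1) \in _)).
  by rewrite -cat_cons mem_cat -h1 alg_final_traj mem_last.
have r1' : ((r, 1) : config R).1 <= (r, 1).2 by exact: ltW.
by rewrite (hi_sorted (sort2_sorted _)) hD (lo_sorted r1').
Qed.

Lemma OPT_return_rounds_le {r rs1 rs2} N : 0 < r ->
  all (fun q => (q == r) || (q == 1)) rs1 -> all (fun q => (q == 0) || (q == 1)) rs2 ->
  rs2 != [::] -> OPT (0, 1) (rounds N (r :: rs1 ++ rs2)) <= N%:R * (2 * r).
Proof.
move=> r0 /allP h1 /allP h2; case: rs2 h2 => [|q rs2] // h2 _.
set Cs : seq (config R) :=
  (r, 1) :: nseq (size rs1) (r, 1) ++ nseq (size (q :: rs2)) (0, 1).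
have hCs : serves (r :: rs1 ++ q :: rs2) Cs.
  split; first by left.
  apply: serves_cat; apply: serves_nseq => q' hq'; apply: covers_pair.
    exact: h1.
  exact: h2.
have hl : last (0, 1) Cs = (0, 1) by rewrite /Cs last_cons last_cat /= last_nseq_id.
apply: le_trans (OPT_rounds_le N hCs hl) _; rewrite ler_wpM2l //.
rewrite /Cs /= sched_cost_cat last_nseq_id /= !sched_cost_nseq.
have := dist_le (0, 1) (r, 1); have := dist_le (r, 1) (0, 1).
rewrite /= !subrr normr0 !addr0 sub0r normrN subr0 (gtr0_norm r0); lra.
Qed.

Lemma left_answer_not_consistent {A : malg R} {r alpha : R} :
  memory_constrained A -> 0 < r -> r < 1 -> 0 <= alpha -> alpha * (1 - r) < 1 ->
  (sort2 (A (0, 1) r (pred_srv r))).1 = r -> ~ consistent A alpha.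
Proof.
move=> [vA hF] r0 r1 a0 ar hD hcons; have [c hc] := hcons (0, 1).
have [n hn] := exists_nat_mul_gt r 1 r0.
set P := predicted ((r :: shuttle r n) ++ [:: 1]).
have [F [hallF finF]] := force_predicted hF ltr01 (alg_final_sorted A (0, 1) P ler01).
have hs : shuttle_round r n F =
    (r, pred_srv r) :: predicted (shuttle r n) ++ predicted (1 :: F).
  by rewrite /shuttle_round predicted_cat.
have fin : alg_final A (0, 1) (shuttle_round r n F) = (0, 1).
  by rewrite /shuttle_round -[1 :: F]cat1s catA predicted_cat alg_final_cat finF.
have cost : 2 <= alg_cost A (0, 1) (shuttle_round r n F).
  rewrite hs; apply: (alg_cost_shuttle_round_ge vA (ltW hn) hD).
    exact: map_fst_predicted.
  by rewrite -hs.
have gap : alpha * (2 * (1 - r)) < 2.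
  by rewrite mulrCA -[X in _ < X]mulr1 ltr_pM2l.
have [N hN] := ALG_rounds_gt A c (ler01 : (0, 1).1 <= (0, 1).2) fin cost a0 gap
  (fun N => (shuttle_rounds_eta r n F N r0 r1 (ltW hn) hallF).2).
have := hc _ (shuttle_rounds_eta r n F N r0 r1 (ltW hn) hallF).1; lra.
Qed.

Lemma right_answer_not_robust {A : malg R} {r beta : R} :
  memory_constrained A -> 0 < r -> r < 1 -> 0 <= beta -> beta * r < 1 ->
  (sort2 (A (0, 1) r (pred_srv r))).2 = r -> ~ robust A beta.
Proof.
move=> [_ hF] r0 r1 b0 br hD hrob; have [c hc] := hrob (0, 1).
have [rs1 [all1 fin1]] := force_predicted hF r1 (sort2_sorted (A (0, 1) r (pred_srv r))).
have [rs2 [all2 fin2]] := force_predicted hF ltr01 (ltW r1 : (r, 1).1 <= (r, 1).2).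
have rs2_nil : rs2 != [::] by apply: contraPneq fin2 => -> [/eqP]; rewrite gt_eqF.
set s := (r, pred_srv r) :: predicted rs1 ++ predicted rs2.
have fin : alg_final A (0, 1) s = (0, 1) by rewrite /s /= alg_final_cat fin1.
have cost : 2 <= alg_cost A (0, 1) s := alg_cost_return_round_ge r1 hD fin1 fin.
have hreq : map fst s = r :: rs1 ++ rs2 by rewrite /= map_cat !map_fst_predicted.
have gap : beta * (2 * r) < 2 by rewrite mulrCA -[X in _ < X]mulr1 ltr_pM2l.
have opt N : OPT (0, 1) (map fst (rounds N s)) <= N%:R * (2 * r).
  by rewrite map_rounds hreq; apply: OPT_return_rounds_le.
have [N hN] := ALG_rounds_gt A c (ler01 : (0, 1).1 <= (0, 1).2) fin cost b0 gap opt.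
have := hc (rounds N s); lra.
Qed.

Lemma exists_radius {lambda b : R} : 0 < lambda -> b < 1 + lambda^-1 ->
  exists r, [/\ 0 < r, r < 1, (1 + lambda) * (1 - r) < 1 & Num.max b 0 * r < 1].
Proof.
move=> l0 hb; set M := Num.max b 1.
have M1 : 1 <= M by rewrite le_max lexx orbT.
have bM : Num.max b 0 <= M by rewrite ge_max !le_max lexx ler01 orbT.
have lM : lambda * M < 1 + lambda.
  have lb : lambda * b < 1 + lambda.
    by move: hb; rewrite -(ltr_pM2l l0) mulrDr mulr1 mulfV ?gt_eqF // addrC.
  by rewrite /M; have [h|h] := lerP b 1; rewrite ?mulr1; lra.
have lM1 : lambda <= lambda * M by rewrite -[X in X <= _]mulr1 ler_pM2l.
set Q := 1 + lambda + lambda * M.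
have Q0 : 0 < Q by rewrite /Q; lra.
set r := 2 * lambda / Q.
have rQ : r * Q = 2 * lambda by rewrite divfK ?gt_eqF.
have Mr : M * r < 1 by rewrite mulrA ltr_pdivrMr // mul1r /Q; lra.
have lMr : lambda * (M * r) < lambda by rewrite -[X in _ < X]mulr1 ltr_pM2l.
exists r; split.
- by rewrite divr_gt0 ?mulr_gt0.
- by rewrite ltr_pdivrMr // mul1r /Q; lra.
- move: rQ lMr; rewrite /Q; lra.
- by apply: le_lt_trans Mr; rewrite ler_wpM2r // ltW // divr_gt0 ?mulr_gt0.
Qed.

End TwoServerLine.

Theorem theorem7 (R : realType) (A : malg R) (lambda : R) :
  0 < lambda <= 1 ->
  memory_constrained A ->
  consistent A (1 + lambda) ->
  forall beta' : R, beta' < 1 + lambda^-1 -> ~ robust A beta'.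
Proof.
move=> /andP[l0 _] hA hcons b hb hrob.
have [r [r0 r1 hcr hbr]] := exists_radius l0 hb.
have := covers_sort2 (hA.1 (0, 1) r (pred_srv r)); case=> hD.
  by apply: left_answer_not_consistent hA r0 r1 _ hcr hD hcons; lra.
apply: right_answer_not_robust hA r0 r1 _ hbr hD _; first by rewrite le_max lexx orbT.
by apply: robust_le hrob _; rewrite le_max lexx.
Qed.
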